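(* Let $\zeta_*\in(0,1]$, $\gamma_*\in(0,1]$, and $\nu_*=(1-\zeta_* )\delta_0+\zeta_*\delta_{\gamma_*}$. Consider the optimization problem of minimizing $\|F_\nu-F_{\nu_*}\|_\infty$ over probability distributions $\nu$ on $\mathbb{R}$ subject to $\nu((0,\infty))\le\frac12\zeta_*$. Then the optimal point of this problem is \[ \nu_{OPT}=(1-\tfrac12\zeta_* )\delta_0+\tfrac12\zeta_*\delta_{2\gamma_*}, \] i.e., $\nu_{OPT}$ is feasible and attains the minimum value.
   Context: $\delta_x$ denotes the point mass at $x$. For a probability distribution $\nu$ on $\mathbb{R}$, $F_\nu(t):=\mathbb{P}_{\mu\sim\nu,\,X\sim\mathcal{N}(\mu,1)}(X\le t)$, and $\|\cdot\|_\infty$ is the sup norm over $t\in\mathbb{R}$. *)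

From HB Require Import structures.
From mathcomp Require Import all_boot all_order all_algebra.
From mathcomp Require Import all_classical all_reals all_analysis.
Set Implicit Arguments. Unset Strict Implicit. Unset Printing Implicit Defensive.
Import Order.TTheory GRing.Theory Num.Theory.
Local Open Scope classical_set_scope.
Local Open Scope ring_scope.

Definition Phi {R : realType} (t : R) : R :=
  fine (normal_prob 0 1 `]-oo, t]).

(* F_nu(t) = P_{mu ~ nu, X ~ N(mu,1)}(X <= t) = \int Phi(t - mu) dnu(mu). *)
Definition Fmix {R : realType} (nu : probability R R) (t : R) : R :=
  fine (\int[nu]_(mu in setT) (Phi (t - mu))%:E)%E.

Definition sup_dist {R : realType} (nu nu' : probability R R) : \bar R :=
  ereal_sup [set (`| Fmix nu t - Fmix nu' t |)%:E | t in [set: R]].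

Definition two_point {R : realType} (p a b : R) (A : set R) : \bar R :=
  ((1 - p) * (\1_A a) + p * (\1_A b))%:E.

From HB Require Import structures.
From mathcomp Require Import all_boot all_order all_algebra.
From mathcomp Require Import all_classical all_reals all_analysis.
From mathcomp Require Import measurable_realfun.
From mathcomp Require Import ring lra.
Import Order.TTheory GRing.Theory Num.Theory.
Import numFieldTopology.Exports.
Local Open Scope classical_set_scope.
Local Open Scope ring_scope.

(* For t <= gamma put s = 2 gamma - t.  The gap D = F_opt - F_star is antisymmetric
   about gamma (D s = - D t) and nonnegative on t <= gamma.  With r = exp (gamma (s - t)),
   the Gaussian likelihood ratio of the shift by s - t at the point t - 2 gamma, the test
   function psi x = r Phi (t - x) - Phi (s - x) is minimal at x = 2 gamma and is at least
   psi 0 on x <= 0.  Hence integrating psi against any nu with nu (0, oo) <= zeta / 2 gives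
   r F_nu t - F_nu s >= r F_opt t - F_opt s, and together with D s = - D t this yields
   (r + 1) D t <= r |F_nu t - F_star t| + |F_nu s - F_star s|. *)

Section standard_normal_cdf.
Context {R : realType}.
Local Notation N := (@normal_prob R 0 1).
Implicit Types a t u v : R.

Lemma PhiE t : (Phi t)%:E = N `]-oo, t].
Proof. by rewrite /Phi fineK// fin_num_measure. Qed.

Lemma Phi_ge0 t : 0 <= Phi t.
Proof. by rewrite -lee_fin PhiE measure_ge0. Qed.

Lemma Phi_le1 t : Phi t <= 1.
Proof. by rewrite -lee_fin PhiE probability_le1. Qed.

Lemma normal_prob_itv_oc u v : u <= v -> N `]u, v] = (Phi v - Phi u)%:E.
Proof.
move=> uv; rewrite EFinB !PhiE (@itv_bndbnd_setU _ _ -oo%O (BRight u) (BRight v)) ?bnd_simp//.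
rewrite measureU//; last first.
  apply/seteqP; split => x //=; rewrite !in_itv/= => -[xu /andP[ux _]].
  by move: (lt_le_trans ux xu); rewrite ltxx.
by rewrite addeAC subee ?add0e// fin_num_measure.
Qed.

Lemma Phi_le u v : u <= v -> Phi u <= Phi v.
Proof. by move=> uv; rewrite -subr_ge0 -lee_fin -normal_prob_itv_oc ?measure_ge0. Qed.

Lemma PhiN a : Phi (- a) = 1 - Phi a.
Proof.
have reflect_tail : N `]-oo, (- a)%R] = N `]a, +oo[.
  rewrite /normal_prob ge0_integration_by_substitutionNy; last 2 first.
  - by apply: continuous_subspaceT; exact: continuous_normal_pdf (oner_neq0 R).
  - by move=> x _; exact: normal_pdf_ge0.
  rewrite integral_itv_obnd_cbnd; last first.
    by apply/measurable_EFinP; apply: measurable_funTS; exact: measurable_normal_pdf.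
  apply: eq_integral => x _; congr EFin.
  by rewrite /= (normal_pdfE _ (oner_neq0 R)) /= /normal_fun !subr0 sqrrN.
have tail_compl : N `]a, +oo[ = (1 - Phi a)%:E.
  rewrite EFinB PhiE -(probability_setT N) -(itv_setU_setT false a) measureU//.
    by rewrite addeAC subee ?add0e// fin_num_measure.
  apply/seteqP; split => x //=; rewrite !in_itv/= andbT => -[xa ax].
  by move: (lt_le_trans ax xa); rewrite ltxx.
by apply: EFin_inj; rewrite PhiE reflect_tail tail_compl.
Qed.

Lemma normal_prob_shift_le u v d k : u <= v ->
  (forall x, u <= x <= v -> k <= d * x + d ^+ 2 / 2) ->
  ((expR k)%:E * N `](u + d)%R, (v + d)%R] <= N `]u, v])%E.
Proof.
move=> uv hk.
have mpdf : measurable_fun setT (normal_pdf (0 : R) 1) := measurable_normal_pdf 0 1.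
have itv_oc D : N `]D.1, D.2] = (\int[lebesgue_measure]_(x in `[D.1, D.2]) (normal_pdf 0 1 x)%:E)%E.
  rewrite /normal_prob integral_itv_obnd_cbnd//.
  by apply/measurable_EFinP; apply: measurable_funTS.
rewrite (itv_oc (u + d, v + d)) (itv_oc (u, v)) /=.
have shift' : (fun x : R => x + d)^`()%classic = cst 1.
  by apply/funext => z; rewrite derive1E deriveD// derive_id derive_cst addr0.
rewrite (@integration_by_substitution_increasing R (fun x => x + d) (normal_pdf 0 1) u v uv); last 6 first.
- by move=> x y _ _; rewrite ltrD2r.
- by rewrite shift' => ? _; exact: cst_continuous.
- by rewrite shift'; exact: is_cvg_cst.
- by rewrite shift'; exact: is_cvg_cst.
- split.
  + by move=> x _; apply: derivableD.
  + by apply: cvg_at_right_filter; apply: cvgD; [exact: cvg_id | exact: cvg_cst].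
  + by apply: cvg_at_left_filter; apply: cvgD; [exact: cvg_id | exact: cvg_cst].
- by apply: continuous_subspaceT; exact: continuous_normal_pdf (oner_neq0 R).
have mshifted : measurable_fun setT (fun x : R => normal_pdf (0 : R) 1 (x + d)).
  by apply: measurableT_comp => //; exact: measurable_funD.
rewrite shift' -ge0_integralZl//; last 2 first.
- by apply/measurable_EFinP; apply: measurable_funTS; apply: measurable_funM.
- by move=> x _; rewrite !fctE /= mulr1 lee_fin normal_pdf_ge0.
apply: ge0_le_integral => //.
- by move=> x _; rewrite -EFinM lee_fin mulr_ge0 ?expR_ge0// !fctE /= mulr1 normal_pdf_ge0.
- apply/measurable_EFinP; apply: measurable_funTS; apply: measurable_funM => //.
  exact: measurable_funM.
- by apply/measurable_EFinP; apply: measurable_funTS.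
move=> x; rewrite /= in_itv/= => xuv.
rewrite !fctE /= mulr1 -EFinM lee_fin (normal_pdfE _ (oner_neq0 R)) /= mulrCA.
apply: ler_wpM2l; first exact: normal_peak_ge0.
rewrite /normal_fun -expRD ler_expR !subr0 expr1n.
have := hk x xuv; lra.
Qed.

Lemma Phi_shift_le u v d k : u <= v ->
  (forall x, u <= x <= v -> k <= d * x + d ^+ 2 / 2) ->
  expR k * (Phi (v + d) - Phi (u + d)) <= Phi v - Phi u.
Proof.
move=> uv hk; rewrite -lee_fin EFinM -!normal_prob_itv_oc ?lerD2r//.
exact: normal_prob_shift_le.
Qed.

(* expR (- (d * c + d ^+ 2 / 2)) is the density ratio phi (c + d) / phi c, and
   phi (x + d) / phi x is nonincreasing in x when 0 <= d. *)
Lemma Phi_shift_le_ratio c d u v : 0 <= d -> c <= u -> u <= v ->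
  Phi (v + d) - Phi (u + d) <= expR (- (d * c + d ^+ 2 / 2)) * (Phi v - Phi u).
Proof.
move=> d0 cu uv; set k := d * c + d ^+ 2 / 2.
have shifted : expR k * (Phi (v + d) - Phi (u + d)) <= Phi v - Phi u.
  apply: Phi_shift_le => // x /andP[ux _].
  by rewrite lerD2r ler_wpM2l// (le_trans cu).
by rewrite -(ler_pM2l (expR_gt0 k)) mulrA -expRD subrr expR0 mul1r.
Qed.

Lemma Phi_shift_ge_ratio c d u v : 0 <= d -> u <= v -> v <= c ->
  expR (- (d * c + d ^+ 2 / 2)) * (Phi v - Phi u) <= Phi (v + d) - Phi (u + d).
Proof.
move=> d0 uv vc; have := @Phi_shift_le (u + d) (v + d) (- d) (- (d * c + d ^+ 2 / 2)).
rewrite !addrK; apply; first by rewrite lerD2r.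
move=> x /andP[_ xv]; suff : d * (x - d) <= d * c by lra.
by rewrite ler_wpM2l// lerBlDr (le_trans xv)// lerD2r.
Qed.

Lemma Phi_sub_reflect u v : Phi v - Phi u = Phi (- u) - Phi (- v).
Proof. rewrite !PhiN; lra. Qed.

Lemma measurable_Phi_sub t : measurable_fun setT (fun x : R => Phi (t - x)).
Proof.
by apply: nonincreasing_measurable => // x y xy; rewrite Phi_le// lerD2l lerN2.
Qed.

End standard_normal_cdf.

Section two_point_distribution.
Context {R : realType}.
Implicit Types (p a b : R).

Definition bool_pick a b (x : bool) : R := if x then b else a.

Lemma measurable_bool_pick a b : measurable_fun setT (bool_pick a b).
Proof. by []. Qed.

HB.instance Definition _ a b :=
  isMeasurableFun.Build _ _ _ _ (bool_pick a b) (measurable_bool_pick a b).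

Definition two_point_prob p a b : probability R R :=
  distribution (bernoulli_prob p) (bool_pick a b).

Lemma two_point_probE p a b A : 0 <= p <= 1 ->
  two_point_prob p a b A = two_point p a b A.
Proof.
move=> p01; rewrite /two_point_prob /distribution /pushforward /=.
rewrite (bernoulli_probE p01) /two_point !diracE !indicE /=.
by rewrite -!EFinM -EFinD addrC.
Qed.

Lemma integral_two_point (nu : probability R R) p a b (f : R -> R) :
  0 <= p <= 1 -> (forall A, measurable A -> nu A = two_point p a b A) ->
  measurable_fun setT f -> (forall x, 0 <= f x) ->
  (\int[nu]_x (f x)%:E = ((1 - p) * f a + p * f b)%:E)%E.
Proof.
move=> p01 nuE mf f0.
rewrite (eq_measure_integral (two_point_prob p a b)); last first.
  by move=> A mA _; exact: etrans (nuE A mA) (esym (two_point_probE _ _ _ A p01)).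
rewrite /two_point_prob ge0_integral_distribution; last 2 first.
- exact/measurable_EFinP.
- by move=> x; rewrite lee_fin.
rewrite integral_bernoulli_prob//; last by move=> x; rewrite /= lee_fin.
by rewrite /= -!EFinM -EFinD addrC.
Qed.

Definition two_point_cdf p a b t := (1 - p) * Phi (t - a) + p * Phi (t - b).

Lemma Fmix_two_point {nu : probability R R} {p a b} t : 0 <= p <= 1 ->
  (forall A, measurable A -> nu A = two_point p a b A) ->
  Fmix nu t = two_point_cdf p a b t.
Proof.
move=> p01 nuE; rewrite /Fmix.
by rewrite (@integral_two_point nu p a b _ p01 nuE (measurable_Phi_sub t) (fun=> Phi_ge0 _)).
Qed.

End two_point_distribution.

Section integral_lower_bound.
Context {d} {T : measurableType d} {R : realType} (P : probability T R).

Lemma integrable_bounded (f : T -> R) (M : R) :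
  measurable_fun setT f -> (forall x, `|f x| <= M) -> P.-integrable setT (EFin \o f).
Proof.
move=> mf fM; apply: measurable_bounded_integrable => //.
  by rewrite ltey_eq fin_num_measure.
exists M; split; first exact: num_real.
by move=> N MN x _; exact: le_trans (fM x) (ltW MN).
Qed.

Lemma Rintegral_ge_step (B : set T) (f : T -> R) (M lo hi q : R) :
  measurable B -> measurable_fun setT f -> (forall x, `|f x| <= M) -> lo <= hi ->
  (forall x, B x -> lo <= f x) -> (forall x, ~ B x -> hi <= f x) ->
  (P B <= q%:E)%E ->
  hi - q * (hi - lo) <= Rintegral P setT f.
Proof.
move=> mB mf fM lohi fB fNB PBq.
pose step x := hi - (hi - lo) * \1_B x.
have step_le x : step x <= f x.
  rewrite /step indicE; have [/set_mem Bx|/negP NBx] := boolP (x \in B).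
    by rewrite mulr1 opprB addrC subrK fB.
  by rewrite mulr0 subr0 fNB//; move/mem_set.
have mind : measurable_fun setT (\1_B : T -> R) by exact: measurable_indic.
have ind_le1 x : `|\1_B x : R| <= 1 by rewrite indicE; case: (x \in B); rewrite ?normr1 ?normr0.
have int_ind : P.-integrable setT (EFin \o (\1_B : T -> R)).
  exact: integrable_bounded ind_le1.
have int_step : P.-integrable setT (EFin \o step).
  apply: (integrable_bounded _ (`|hi| + `|hi - lo|)).
    by apply: measurable_funB => //; exact: measurable_funM.
  move=> x; apply: (le_trans (ler_normB _ _)); rewrite lerD2l normrM.
  by rewrite ler_piMr// ind_le1.
have Rint_step : Rintegral P setT step = hi - (hi - lo) * fine (P B).
  rewrite RintegralB//; last 2 first.
  - exact: finite_measure_integrable_cst.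
  - apply: (integrable_bounded _ `|hi - lo|); first exact: measurable_funM.
    by move=> x; rewrite normrM ler_piMr// ind_le1.
  have PT : fine (P setT) = 1 by rewrite probability_setT.
  rewrite Rintegral_cst// RintegralZl//; congr (_ - _ * _).
    by rewrite -[RHS]mulr1; congr (_ * _); exact: PT.
  by rewrite /Rintegral integral_indic// setIT.
have PB_le_q : fine (P B) <= q by rewrite -lee_fin fineK ?fin_num_measure.
apply: le_trans (le_Rintegral _ int_step _ _) => //; last first.
  by apply: integrable_bounded fM.
by rewrite Rint_step lerD2l lerN2 mulrC ler_wpM2r// subr_ge0.
Qed.

End integral_lower_bound.

Section gap.
Context {R : realType} (z g : R).
Local Notation F_star := (two_point_cdf z 0 g).
Local Notation F_opt := (two_point_cdf (z / 2) 0 (g *+ 2)).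

Definition gap (t : R) := F_opt t - F_star t.

Lemma gapE t :
  gap t = z / 2 * ((Phi t - Phi (t - g)) - (Phi (t - g) - Phi (t - g *+ 2))).
Proof. by rewrite /gap /two_point_cdf !subr0; field. Qed.

Lemma gap_reflect t : gap (g *+ 2 - t) = - gap t.
Proof.
have e1 : g *+ 2 - t = - (t - g *+ 2) by ring.
have e2 : g *+ 2 - t - g = - (t - g) by ring.
have e3 : g *+ 2 - t - g *+ 2 = - t by ring.
by rewrite !gapE e2 e3 e1 !PhiN; field.
Qed.

Lemma gap_ge0 t : 0 <= z -> 0 <= g -> t <= g -> 0 <= gap t.
Proof.
move=> z0 g0 tg; rewrite gapE mulr_ge0 ?divr_ge0// subr_ge0 Phi_sub_reflect.
have := @Phi_shift_le_ratio _ (t - g) ((g - t) *+ 2) (t - g) t.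
have -> : (g - t) *+ 2 * (t - g) + ((g - t) *+ 2) ^+ 2 / 2 = 0 by field.
rewrite oppr0 expR0 mul1r.
have -> : t + (g - t) *+ 2 = - (t - g *+ 2) by ring.
have -> : t - g + (g - t) *+ 2 = - (t - g) by ring.
by apply; lra.
Qed.

End gap.

Section gap_bound.
Context {R : realType} (z g : R) (nu : probability R R) (t : R).
Hypotheses (g0 : 0 <= g) (tg : t <= g)
  (nu_pos : (nu [set x | (0 < x)%R] <= (z / 2)%:E)%E).
Local Notation F_star := (two_point_cdf z 0 g).
Local Notation F_opt := (two_point_cdf (z / 2) 0 (g *+ 2)).

Let d : R := (g - t) *+ 2.
Let s : R := t + d.
Let r : R := expR (g * d).
Let psi (x : R) : R := r * Phi (t - x) - Phi (s - x).

Let d_ge0 : 0 <= d. Proof. by rewrite /d; move: tg; lra. Qed.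

Let ratioE : - (d * (t - g *+ 2) + d ^+ 2 / 2) = g * d.
Proof. by rewrite /d; field. Qed.

Let shiftE x : t - x + d = s - x.
Proof. by rewrite addrAC. Qed.

Let psi_min x : psi (g *+ 2) <= psi x.
Proof.
rewrite /psi; have [x_le|x_gt] := leP x (g *+ 2).
  have := @Phi_shift_le_ratio _ (t - g *+ 2) d (t - g *+ 2) (t - x) d_ge0 (lexx _).
  rewrite ratioE !shiftE -/r => /(_ ltac:(lra)).
  lra.
have := @Phi_shift_ge_ratio _ (t - g *+ 2) d (t - x) (t - g *+ 2) d_ge0.
rewrite ratioE !shiftE -/r => /(_ ltac:(lra) (lexx _)).
lra.
Qed.

Let psi_ge_at0 x : x <= 0 -> psi 0 <= psi x.
Proof.
move=> x_le0; rewrite /psi !subr0.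
have := @Phi_shift_le_ratio _ (t - g *+ 2) d t (t - x) d_ge0.
rewrite ratioE shiftE -/r -/s => /(_ ltac:(move: g0; lra) ltac:(lra)).
lra.
Qed.

Let measurable_psi : measurable_fun setT psi.
Proof.
apply: measurable_funB; last exact: measurable_Phi_sub.
by apply: measurable_funM => //; exact: measurable_Phi_sub.
Qed.

Let psi_bounded x : `|psi x| <= r + 1.
Proof.
have r_ge0 : 0 <= r := expR_ge0 _.
rewrite /psi ler_norml.
have := Phi_ge0 (t - x); have := Phi_le1 (t - x).
have := Phi_ge0 (s - x); have := Phi_le1 (s - x).
nra.
Qed.

Let Rintegral_psi : Rintegral nu setT psi = r * Fmix nu t - Fmix nu s.
Proof.
have Phi_bounded y x : `|Phi (y - x)| <= 1 by rewrite ger0_norm ?Phi_ge0 ?Phi_le1.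
rewrite /psi RintegralB//; last 2 first.
- apply: (integrable_bounded nu _ r).
    by apply: measurable_funM => //; exact: measurable_Phi_sub.
  by move=> x; rewrite normrM ger0_norm ?expR_ge0// ler_piMr ?expR_ge0 ?Phi_bounded.
- exact: (integrable_bounded nu _ 1 (measurable_Phi_sub _)).
rewrite RintegralZl//.
exact: (integrable_bounded nu _ 1 (measurable_Phi_sub _)).
Qed.

Let F_opt_psi : r * F_opt t - F_opt s = psi 0 - z / 2 * (psi 0 - psi (g *+ 2)).
Proof. by rewrite /psi /two_point_cdf !subr0; ring. Qed.

Let psi_lower_bound : r * F_opt t - F_opt s <= r * Fmix nu t - Fmix nu s.
Proof.
rewrite F_opt_psi -Rintegral_psi.
apply: (@Rintegral_ge_step _ _ _ nu [set x | 0 < x] psi (r + 1)) => //.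
- by rewrite -set_itvoy.
- by move=> x /negP; rewrite -leNgt; exact: psi_ge_at0.
Qed.

Lemma gap_le_max_err :
  gap z g t <= Num.max `|Fmix nu t - F_star t|
                       `|Fmix nu (g *+ 2 - t) - F_star (g *+ 2 - t)|.
Proof.
have -> : g *+ 2 - t = s by rewrite /s /d; ring.
set m := Num.max _ _; have r_gt0 : 0 < r := expR_gt0 _.
have gap_s : gap z g s = - gap z g t by rewrite -gap_reflect /s /d; congr gap; ring.
have err_t : Fmix nu t - F_star t <= m by rewrite (le_trans (ler_norm _)) ?le_max ?lexx.
have err_s : - m <= Fmix nu s - F_star s.
  by rewrite lerNl (le_trans (ler_norm _))// normrN le_max lexx orbT.
have regroup x y :
    r * (x - F_star t) - (y - F_star s) = (r * x - y) - (r * F_star t - F_star s).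
  by ring.
have key : r * gap z g t - gap z g s
    <= r * (Fmix nu t - F_star t) - (Fmix nu s - F_star s).
  by rewrite /gap !regroup lerD2r psi_lower_bound.
rewrite -(ler_pM2l (addr_gt0 r_gt0 ltr01)) mulrDl mul1r -[X in _ + X]opprK -gap_s.
apply: (le_trans key).
rewrite mulrDl mul1r; apply: lerD; last by rewrite lerNl.
by apply: ler_wpM2l => //; exact: ltW.
Qed.

End gap_bound.

Lemma abs_gap_le_max_err {R : realType} {z g : R} {nu : probability R R} t :
  0 <= z -> 0 <= g -> (nu [set x | (0 < x)%R] <= (z / 2)%:E)%E ->
  `|gap z g t| <= Num.max `|Fmix nu t - two_point_cdf z 0 g t|
                          `|Fmix nu (g *+ 2 - t) - two_point_cdf z 0 g (g *+ 2 - t)|.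
Proof.
move=> z0 g0 nu_pos; have [tg|gt] := leP t g.
  by rewrite ger0_norm ?gap_ge0//; exact: gap_le_max_err.
have reflect_le : g *+ 2 - t <= g by lra.
have -> : gap z g t = - gap z g (g *+ 2 - t).
  by rewrite -gap_reflect; congr gap; ring.
rewrite normrN ger0_norm ?gap_ge0// maxC.
have := gap_le_max_err _ _ _ _ g0 reflect_le nu_pos.
by rewrite (_ : g *+ 2 - (g *+ 2 - t) = t)//; ring.
Qed.

Theorem lemma9 (R : realType) (zeta gamma : R)
  (hz : 0 < zeta <= 1) (hg : 0 < gamma <= 1)
  (nu_star : probability R R)
  (hstar : forall A : set R, measurable A -> nu_star A = two_point zeta 0 gamma A) :
  exists nu_opt : probability R R,
    (forall A : set R, measurable A ->
       nu_opt A = two_point (zeta / 2) 0 (gamma *+ 2) A) /\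
    (nu_opt [set x : R | (0 < x)%R] <= (zeta / 2)%:E)%E /\
    (forall nu : probability R R, (nu [set x : R | (0 < x)%R] <= (zeta / 2)%:E)%E ->
       (sup_dist nu_opt nu_star <= sup_dist nu nu_star)%E).
Proof.
move: hz hg => /andP[z0 z1] /andP[g0 _].
have z01 : 0 <= zeta <= 1 by rewrite ltW.
have z2_01 : 0 <= zeta / 2 <= 1 by apply/andP; split; lra.
have nu_optE A : measurable A ->
    two_point_prob (zeta / 2) 0 (gamma *+ 2) A = two_point (zeta / 2) 0 (gamma *+ 2) A.
  by move=> _; exact: two_point_probE.
exists (two_point_prob (zeta / 2) 0 (gamma *+ 2)); split; [exact: nu_optE | split].
  rewrite two_point_probE// /two_point !indicE memNset /= ?ltxx// mulr0 add0r lee_fin.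
  by rewrite ler_piMr ?lern1 ?leq_b1//; case/andP: z2_01.
move=> nu nu_pos; apply: ub_ereal_sup => _ [t _ <-].
rewrite (Fmix_two_point _ z2_01 nu_optE) (Fmix_two_point _ z01 hstar) -/(gap _ _ t).
have := abs_gap_le_max_err t (ltW z0) (ltW g0) nu_pos.
rewrite -lee_fin => /le_trans; apply.
rewrite EFin_max ge_max -!(Fmix_two_point _ z01 hstar).
by apply/andP; split; apply: ereal_sup_ubound; [exists t | exists (gamma *+ 2 - t)].
Qed.
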